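(* Let $k\in\omega$. For every partition $\mathbb{C}_k=\bigcup_{i<2^k}X_i$ into $2^k$ pieces there is $i<2^k$ such that $\bigcup X_i=[0,1]^n$.
   Context: Fix a positive integer $n$ and real $0<r<n$. For each $k\in\omega$ fix $M_k\in\omega$ so large that $2^k(\sqrt{n}/M_k)^r<2^{-k}$. $C_k$ is the set of all cubes $[\frac{j_0}{M_k},\frac{j_0+1}{M_k}]\times\cdots\times[\frac{j_{n-1}}{M_k},\frac{j_{n-1}+1}{M_k}]$ with $j_i\in\{0,\dots,M_k-1\}$ for each $i<n$. $\mathbb{C}_k$ is the set of all subsets of $[0,1]^n$ that can be written as the union of $2^k$ (not necessarily distinct) elements of $C_k$. For $X\subset\mathbb{C}_k$, $\bigcup X$ denotes the union of the members of $X$. *)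

From Stdlib Require Import Reals Lra.
Open Scope R_scope.

(* Points of R^n are encoded as functions nat -> R; only coordinates i < n matter.
   All sets below only inspect coordinates i < n. *)
Definition point := nat -> R.
Definition rset := point -> Prop.

Definition unit_cube (n : nat) : rset :=
  fun x => forall i, (i < n)%nat -> 0 <= x i <= 1.

Definition valid_index (n M : nat) (j : nat -> nat) : Prop :=
  forall i, (i < n)%nat -> (j i < M)%nat.

Definition grid_cube (n M : nat) (j : nat -> nat) : rset :=
  fun x => forall i, (i < n)%nat ->
    INR (j i) / INR M <= x i <= (INR (j i) + 1) / INR M.

Definition C_cubes (n M : nat) (Q : rset) : Prop :=
  exists j, valid_index n M j /\ (forall x, Q x <-> grid_cube n M j x).

(* bold C_k: sets that are a union of 2^k (not necessarily distinct) elements of C_k. *)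
Definition CC (n M k : nat) (A : rset) : Prop :=
  exists Qs : nat -> rset,
    (forall m, (m < 2 ^ k)%nat -> C_cubes n M (Qs m)) /\
    (forall x, A x <-> exists m, (m < 2 ^ k)%nat /\ Qs m x).

Definition bigU (X : rset -> Prop) : rset :=
  fun x => exists A, X A /\ A x.

(* X_0,...,X_{N-1} is a partition of the family F (pieces may be empty). *)
Definition is_partition (F : rset -> Prop) (N : nat) (X : nat -> rset -> Prop) : Prop :=
  (forall i A, (i < N)%nat -> X i A -> F A) /\
  (forall A, F A -> exists i, (i < N)%nat /\ X i A) /\
  (forall i i' A, (i < N)%nat -> (i' < N)%nat -> X i A -> X i' A -> i = i').

(* Suppose no piece covers the cube and pick, for each i < 2^k, a point x_i of
   [0,1]^n outside the union of X_i.  The union of 2^k grid cubes, the i-th one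
   containing x_i, is an element of C_k, so it lies in some X_i; but then it
   puts x_i inside the union of X_i.  The bound on M_k only ensures M_k > 0. *)
From Stdlib Require Import Reals Lra Lia ZArith Classical ClassicalEpsilon.
Open Scope R_scope.

Lemma Rpower_0_l (r : R) : Rpower 0 r = 1.
Proof.
  assert (ln0 : ln 0 = 0).
  { unfold ln; destruct (Rlt_dec 0 0) as [h|h]; [exfalso; lra|reflexivity]. }
  unfold Rpower; rewrite ln0, Rmult_0_r; exact exp_0.
Qed.

Lemma grid_size_pos (k m : nat) (s r : R) :
  2 ^ k * Rpower (s / INR m) r < / 2 ^ k -> (0 < m)%nat.
Proof.
  intros hm; destruct m as [|m]; [exfalso|lia].
  rewrite Rdiv_0_r, Rpower_0_l, Rmult_1_r in hm.
  assert (h1 : 1 <= 2 ^ k) by (apply pow_R1_Rle; lra).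
  assert (/ 2 ^ k <= 1) by (rewrite <- Rinv_1; apply Rinv_le_contravar; lra).
  lra.
Qed.

Lemma div_bounds_of_mul_bounds (a b y m : R) :
  0 < m -> a <= y * m <= b -> a / m <= y <= b / m.
Proof.
  intros hm [ha hb]; unfold Rdiv; split;
    apply Rmult_le_reg_r with m; try lra;
    rewrite Rmult_assoc, Rinv_l; lra.
Qed.

(* The last cell is closed on the right, hence the cut-off at [M - 1] for [y = 1]. *)
Definition grid_index (M : nat) (y : R) : nat :=
  Nat.min (Z.to_nat (Zfloor (y * INR M))) (M - 1).

Lemma grid_index_spec (M : nat) (y : R) : (0 < M)%nat -> 0 <= y <= 1 ->
  (grid_index M y < M)%nat /\
  INR (grid_index M y) / INR M <= y <= (INR (grid_index M y) + 1) / INR M.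
Proof.
  intros hM hy.
  assert (hm : 0 < INR M) by (apply lt_0_INR; lia).
  assert (hym : 0 <= y * INR M <= INR M) by nra.
  pose proof (Zfloor_bound (y * INR M)) as hfl.
  set (z := Zfloor (y * INR M)) in *.
  assert (hz0 : (0 <= z)%Z) by (apply Zfloor_lub; lra).
  assert (hzM : INR (Z.to_nat z) = IZR z) by (rewrite INR_IZR_INZ, Z2Nat.id; auto).
  unfold grid_index; fold z; split; [lia|].
  apply div_bounds_of_mul_bounds; [exact hm|].
  destruct (Nat.le_gt_cases (Z.to_nat z) (M - 1)) as [hle|hgt].
  - rewrite Nat.min_l, hzM by exact hle; lra.
  - rewrite Nat.min_r, minus_INR by lia.
    assert (INR M <= INR (Z.to_nat z)) by (apply le_INR; lia).
    simpl INR; lra.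
Qed.

Definition grid_cell (M : nat) (x : point) : nat -> nat :=
  fun i => grid_index M (x i).

Lemma grid_cell_spec (n M : nat) (x : point) : (0 < M)%nat -> unit_cube n x ->
  valid_index n M (grid_cell M x) /\ grid_cube n M (grid_cell M x) x.
Proof.
  intros hM hx; split; intros i hi; apply (grid_index_spec M (x i) hM (hx i hi)).
Qed.

Lemma grid_cube_sub_unit_cube (n M : nat) (j : nat -> nat) (x : point) :
  valid_index n M j -> grid_cube n M j x -> unit_cube n x.
Proof.
  intros hj hx i hi; specialize (hj i hi); specialize (hx i hi).
  assert (hm : 0 < INR M) by (apply lt_0_INR; lia).
  assert (INR (j i) + 1 <= INR M) by (rewrite <- S_INR; apply le_INR; lia).
  assert (0 <= INR (j i)) by apply pos_INR.
  assert (0 <= INR (j i) / INR M) 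
    by (apply Rmult_le_pos; [lra | left; apply Rinv_0_lt_compat; lra]).
  assert ((INR (j i) + 1) / INR M <= 1).
  { apply Rmult_le_reg_r with (INR M); [exact hm|].
    unfold Rdiv; rewrite Rmult_assoc, Rinv_l; lra. }
  lra.
Qed.

Lemma CC_sub_unit_cube (n M k : nat) (A : rset) (x : point) :
  CC n M k A -> A x -> unit_cube n x.
Proof.
  intros [Qs [hQs hA]] hx.
  destruct (proj1 (hA x) hx) as [m [hm hQx]].
  destruct (hQs m hm) as [j [hj hQ]].
  exact (grid_cube_sub_unit_cube n M j x hj (proj1 (hQ x) hQx)).
Qed.

Lemma CC_contains_points (n M k : nat) (xs : nat -> point) : (0 < M)%nat ->
  (forall m, (m < 2 ^ k)%nat -> unit_cube n (xs m)) ->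
  exists A, CC n M k A /\ forall m, (m < 2 ^ k)%nat -> A (xs m).
Proof.
  intros hM hxs.
  set (Qs := fun m => grid_cube n M (grid_cell M (xs m))).
  exists (fun y => exists m, (m < 2 ^ k)%nat /\ Qs m y); split.
  - exists Qs; split; [|tauto].
    intros m hm; exists (grid_cell M (xs m)); split; [|tauto].
    exact (proj1 (grid_cell_spec n M (xs m) hM (hxs m hm))).
  - intros m hm; exists m; split; [exact hm|].
    exact (proj2 (grid_cell_spec n M (xs m) hM (hxs m hm))).
Qed.

(* Diagonal argument: points missed by the respective pieces would all lie in
   one member of [F], which belongs to no piece. *)
Lemma diagonal_piece_covers (F : rset -> Prop) (N : nat) (X : nat -> rset -> Prop)
    (D : rset) :
  (forall A, F A -> exists i, (i < N)%nat /\ X i A) ->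
  (forall xs : nat -> point, (forall i, (i < N)%nat -> D (xs i)) ->
     exists A, F A /\ forall i, (i < N)%nat -> A (xs i)) ->
  exists i, (i < N)%nat /\ forall x, D x -> bigU (X i) x.
Proof.
  intros hcover hmeet; apply NNPP; intros hnone.
  assert (hmiss : forall i, exists x : point,
             (i < N)%nat -> D x /\ ~ bigU (X i) x).
  { intros i; apply NNPP; intros hall; apply hnone; exists i.
    split; [apply NNPP; intros hi; apply hall; exists (fun _ => 0); tauto|].
    intros x hx; apply NNPP; intros hnx; apply hall; exists x; tauto. }
  destruct (choice _ hmiss) as [xs hxs].
  destruct (hmeet xs (fun i hi => proj1 (hxs i hi))) as [A [hA hAxs]].
  destruct (hcover A hA) as [i [hi hXA]].
  apply (proj2 (hxs i hi)); exists A; auto.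
Qed.

Theorem lemma4p3 (n : nat) (r : R) (M : nat -> nat)
  (hn : (0 < n)%nat) (hr0 : 0 < r) (hrn : r < INR n)
  (hM : forall k : nat,
      2 ^ k * Rpower (sqrt (INR n) / INR (M k)) r < / 2 ^ k)
  (k : nat) (X : nat -> rset -> Prop)
  (hX : is_partition (CC n (M k) k) (2 ^ k) X) :
  exists i, (i < 2 ^ k)%nat /\ (forall x, bigU (X i) x <-> unit_cube n x).
Proof.
  destruct hX as [hsound [hcover _]].
  pose proof (grid_size_pos k (M k) _ _ (hM k)) as hMk.
  destruct (diagonal_piece_covers _ _ X (unit_cube n) hcover
              (fun xs hxs => CC_contains_points n (M k) k xs hMk hxs))
    as [i [hi hcube]].
  exists i; split; [exact hi|]; intros x; split; [|exact (hcube x)].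
  intros [A [hA hx]]; exact (CC_sub_unit_cube n (M k) k A x (hsound i A hi hA) hx).
Qed.
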